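(* Let $P,Q,R_0,R_1$ be integers with $PQ\neq 0$, $\Delta:=P^2-4Q\neq 0$, $|R_0|+|R_1|>0$ and $\gcd(P,Q)=\gcd(R_1,Q)=1$, and let $(R_n)_{n\ge 0}$ be defined by $R_{n+2}=PR_{n+1}-QR_n$ for all $n\geq 0$. Assume $\alpha/\beta$ is not a root of unity, where $\alpha,\beta$ are the roots of $x^2-Px+Q$. Let $n$ and $k$ be positive integers with $n\geq k$. Then the integer $L_{k,n}:=\mathrm{lcm}(R_k,R_{k+1},\dots,R_n)$ is a multiple of the rational number \[\frac{R_kR_{k+1}\cdots R_n}{[n-k]_{\boldsymbol{U}}!\,\left(\gcd(R_0,R_1)\right)^{n-k}},\] i.e. $L_{k,n}$ divided by this rational number is an integer.
   Context: $\alpha,\beta$ are the two distinct roots of $x^2-Px+Q$, labelled so that $|\alpha|\ge|\beta|$. The Lucas sequence is $U_n=(\alpha^n-\beta^n)/(\alpha-\beta)$ ($n\ge 0$), equivalently $U_0=0,U_1=1,U_{n+2}=PU_{n+1}-QU_n$. For $j\ge 0$, $[j]_{\boldsymbol{U}}!:=U_1U_2\cdots U_j$ with $[0]_{\boldsymbol{U}}!=1$. *)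

From mathcomp Require Import all_boot all_order all_algebra all_field.
Set Implicit Arguments. Unset Strict Implicit. Unset Printing Implicit Defensive.
Import Order.TTheory GRing.Theory Num.Theory.
Local Open Scope ring_scope.

Fixpoint lucasU (P Q : int) (n : nat) : int :=
  match n with
  | 0%N => 0
  | S n1 => match n1 with
            | 0%N => 1
            | S m => P * lucasU P Q n1 - Q * lucasU P Q m
            end
  end.

Definition lucas_fact (P Q : int) (j : nat) : int :=
  \prod_(1 <= i < j.+1) lucasU P Q i.

(* lcm(R_k, ..., R_n) (nonnegative; equals 0 if some R_i = 0). *)
Definition lcm_range (R : nat -> int) (k n : nat) : int :=
  \big[lcmz/1]_(k <= i < n.+1) R i.

From mathcomp Require Import all_boot all_order all_algebra all_field.
From mathcomp Require Import ring.
Set Implicit Arguments. Unset Strict Implicit. Unset Printing Implicit Defensive.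
Import Order.TTheory GRing.Theory Num.Theory.
Local Open Scope ring_scope.

(* Write g = gcd(R_0, R_1) and T = R_k ... R_{k+m}. Shifting the recurrence gives
   R_{k+m+1} = U_{m+1} R_{k+1} - Q U_m R_k, and a Bezout relation for (R_0, R_1)
   propagated along the recurrence gives x R_k + y R_{k+1} = g Q^k; together they
   yield an integer combination of R_{k+m+1} and R_k equal to U_{m+1} g Q^k.
   Induction on m then shows that T divides L [m]_U! g^m Q^e for every common
   multiple L of R_k, ..., R_{k+m} and some e. For k > 0 every R_k is coprime to Q,
   as R_{i+1} = P^i R_1 mod Q, so the power of Q can be dropped. Finally
   [m]_U! g^m is nonzero: U_i = 0 with i > 0 would force (alpha/beta)^i = 1 by
   the Binet formula. *)

Section LucasSequence.

Variables P Q : int.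

Lemma lucasUS m : lucasU P Q m.+2 = P * lucasU P Q m.+1 - Q * lucasU P Q m.
Proof. by []. Qed.

Lemma lucas_fact_recr m : lucas_fact P Q m.+1 = lucas_fact P Q m * lucasU P Q m.+1.
Proof. by rewrite /lucas_fact big_nat_recr. Qed.

Lemma lucasU_binet (F : comPzRingType) (a b : F) :
  a + b = P%:~R -> a * b = Q%:~R ->
  forall n, (lucasU P Q n)%:~R * (a - b) = a ^+ n - b ^+ n.
Proof.
move=> sum_ab prod_ab.
suff binet2 n : (lucasU P Q n)%:~R * (a - b) = a ^+ n - b ^+ n /\
                (lucasU P Q n.+1)%:~R * (a - b) = a ^+ n.+1 - b ^+ n.+1.
  by move=> n; case: (binet2 n).
elim: n => [|n [IHn IHn1]]; first by split; rewrite /= ?mul0r ?subrr ?mul1r ?expr1.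
split=> //.
rewrite lucasUS rmorphB !rmorphM /= mulrBl -!mulrA IHn IHn1 -sum_ab -prod_ab !exprS.
ring.
Qed.

Lemma lucas_roots (C : numClosedFieldType) : Q != 0 -> P ^+ 2 - 4 * Q != 0 ->
  exists a b : C, [/\ a + b = P%:~R, a * b = Q%:~R, a != b & b != 0].
Proof.
move=> Q_neq0 Delta_neq0.
have Delta_C : ((P ^+ 2 - 4 * Q)%:~R : C) = P%:~R ^+ 2 - 4 * Q%:~R.
  by rewrite rmorphB /= !rmorphM /= expr2 rmorph_nat.
set d := sqrtC ((P ^+ 2 - 4 * Q)%:~R : C).
have d2 : d ^+ 2 = P%:~R ^+ 2 - 4 * Q%:~R by rewrite sqrtCK Delta_C.
have d_neq0 : d != 0.
  by apply: contra Delta_neq0 => /eqP d0; rewrite -(intr_eq0 C) Delta_C -d2 d0 expr0n.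
have two_neq0 : (2 : C) != 0 by rewrite pnatr_eq0.
set a := (P%:~R + d) / 2; set b := (P%:~R - d) / 2.
have ab_prod : a * b = Q%:~R.
  have -> : a * b = (P%:~R ^+ 2 - d ^+ 2) / 4 by rewrite /a /b; field.
  by rewrite d2; field.
exists a, b; split=> //.
- by rewrite /a /b; field.
- by rewrite -subr_eq0 (_ : a - b = d) // /a /b; field.
- by apply: contra Q_neq0 => /eqP b0; rewrite -(intr_eq0 C) -ab_prod b0 mulr0.
Qed.

Hypothesis Q_neq0 : Q != 0.
Hypothesis Delta_neq0 : P ^+ 2 - 4 * Q != 0.
Hypothesis root_ratio_not_unity : forall alpha beta : algC,
  alpha ^+ 2 - P%:~R * alpha + Q%:~R = 0 ->
  beta ^+ 2 - P%:~R * beta + Q%:~R = 0 ->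
  alpha != beta -> forall m : nat, (0 < m)%N -> (alpha / beta) ^+ m != 1.

Lemma lucasU_neq0 i : (0 < i)%N -> lucasU P Q i != 0.
Proof.
move=> i_gt0.
have [a [b [sum_ab prod_ab a_neq_b b_neq0]]] := lucas_roots algC Q_neq0 Delta_neq0.
have root_a : a ^+ 2 - P%:~R * a + Q%:~R = 0 by rewrite -sum_ab -prod_ab; ring.
have root_b : b ^+ 2 - P%:~R * b + Q%:~R = 0 by rewrite -sum_ab -prod_ab; ring.
have := root_ratio_not_unity root_a root_b a_neq_b i_gt0; apply: contra => /eqP Ui0.
have := lucasU_binet sum_ab prod_ab i; rewrite Ui0 mul0r => /esym/eqP.
by rewrite subr_eq0 expr_div_n => /eqP ->; rewrite divff // expf_neq0.
Qed.

Lemma lucas_fact_neq0 m : lucas_fact P Q m != 0.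
Proof.
rewrite /lucas_fact prodf_seq_neq0; apply/allP => i.
by rewrite mem_index_iota => /andP[i_gt0 _]; apply: lucasU_neq0.
Qed.

End LucasSequence.

Lemma dvdz_biglcmz (I : eqType) (s : seq I) (F : I -> int) i :
  i \in s -> (F i %| \big[lcmz/1]_(j <- s) F j)%Z.
Proof.
elim: s => [//|a s IHs]; rewrite inE big_cons => /orP[/eqP -> | i_in_s].
  exact: dvdz_lcml.
exact: dvdz_trans (IHs i_in_s) (dvdz_lcmr _ _).
Qed.

Lemma dvdz_mul_ratE (F : numFieldType) (T L D : int) : D != 0 ->
  (T %| L * D)%Z -> exists z : int, (L%:~R : F) = z%:~R * (T%:~R / D%:~R).
Proof.
move=> D_neq0 /dvdzP[z LD_eq]; exists z.
have D_F_neq0 : (D%:~R : F) != 0 by rewrite intr_eq0.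
by rewrite mulrA -rmorphM /= -LD_eq rmorphM /= mulfK.
Qed.

Section RecurrenceSequence.

Variables (P Q : int) (R : nat -> int).
Hypothesis R_rec : forall m, R m.+2 = P * R m.+1 - Q * R m.

Let g := gcdz (R 0%N) (R 1%N).

Lemma R_addS k m : R (k + m.+1)%N = lucasU P Q m.+1 * R k.+1 - Q * lucasU P Q m * R k.
Proof.
suff R_add2 j : R (k + j.+1)%N = lucasU P Q j.+1 * R k.+1 - Q * lucasU P Q j * R k /\
   R (k + j.+2)%N = lucasU P Q j.+2 * R k.+1 - Q * lucasU P Q j.+1 * R k.
  by case: (R_add2 m).
elim: j => [|j [IHj IHj1]].
  by rewrite !addnS !addn0 R_rec lucasUS /=; split; ring.
split=> //.
by rewrite !addnS R_rec -!addnS IHj IHj1 (lucasUS P Q j.+1) (lucasUS P Q j); ring.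
Qed.

Lemma R_gcd_bezout k : exists x y : int, x * R k + y * R k.+1 = g * Q ^+ k.
Proof.
elim: k => [|k [x [y IHk]]].
  by have [u [v uv]] := Bezoutz (R 0%N) (R 1%N); exists u, v; rewrite expr0 mulr1.
by exists (x * P + y * Q), (- x); rewrite R_rec exprS mulrCA -IHk; ring.
Qed.

Lemma R_lucasU_gcd_bezout k m :
  exists x y : int, x * R (k + m.+1)%N + y * R k = lucasU P Q m.+1 * (g * Q ^+ k).
Proof.
have [x [y xy]] := R_gcd_bezout k.
exists y, (lucasU P Q m.+1 * x + y * Q * lucasU P Q m).
by rewrite -xy R_addS; ring.
Qed.

Lemma coprimez_R_Q i : gcdz P Q = 1 -> gcdz (R 1%N) Q = 1 -> coprimez (R i.+1) Q.
Proof.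
move=> PQ_coprime R1Q_coprime.
have [t ->] : exists t, R i.+1 = P ^+ i * R 1%N + t * Q.
  elim: i => [|i [t IHi]]; first by exists 0; rewrite expr0 mul1r mul0r addr0.
  by exists (P * t - R i); rewrite R_rec IHi exprS; ring.
rewrite /coprimez gcdzC addrC gcdzMDl gcdzC -/(coprimez _ _).
by rewrite coprimezMl coprimezXl ?andbT /coprimez ?PQ_coprime ?R1Q_coprime.
Qed.

Lemma dvdz_prodR_mul_fact m k : exists e : nat, forall L : int,
  (forall i, (k <= i <= k + m)%N -> (R i %| L)%Z) ->
  (\prod_(k <= i < k + m.+1) R i %| L * (lucas_fact P Q m * g ^+ m * Q ^+ e))%Z.
Proof.
elim: m k => [|m IHm] k.
  exists 0%N => L R_dvdL.
  rewrite /lucas_fact big_geq // addn1 big_nat1 !expr0 !mulr1.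
  by apply: R_dvdL; rewrite addn0 leqnn.
have [e1 dvd_lo] := IHm k; have [e2 dvd_hi] := IHm k.+1.
have [x [y xy]] := R_lucasU_gcd_bezout k m.
exists (e1 + e2 + k)%N => L R_dvdL.
set A := lucas_fact P Q m * g ^+ m.
have {}dvd_lo : (\prod_(k <= i < k + m.+1) R i %| L * (A * Q ^+ e1))%Z.
  apply: dvd_lo => i /andP[k_le_i i_le]; apply: R_dvdL.
  by rewrite k_le_i (leq_trans i_le) // leq_add2l.
have {}dvd_hi : (\prod_(k.+1 <= i < k.+1 + m.+1) R i %| L * (A * Q ^+ e2))%Z.
  apply: dvd_hi => i /andP[k_lt_i i_le]; apply: R_dvdL.
  by rewrite (ltnW k_lt_i) (leq_trans i_le) // addSn -addnS.
have prod_recr : \prod_(k <= i < k + m.+2) R i =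
    (\prod_(k <= i < k + m.+1) R i) * R (k + m.+1)%N.
  by rewrite addnS big_nat_recr // leq_addr.
have prod_recl : \prod_(k <= i < k + m.+2) R i = R k * \prod_(k.+1 <= i < k.+1 + m.+1) R i.
  by rewrite big_ltn ?addSn ?addnS // ltnS (leq_trans (leq_addr m k)).
have -> : L * (lucas_fact P Q m.+1 * g ^+ m.+1 * Q ^+ (e1 + e2 + k)) =
    L * (A * Q ^+ e1) * R (k + m.+1)%N * (x * Q ^+ e2) +
    R k * (L * (A * Q ^+ e2)) * (y * Q ^+ e1).
  have -> : lucas_fact P Q m.+1 * g ^+ m.+1 * Q ^+ (e1 + e2 + k) =
      A * Q ^+ e1 * Q ^+ e2 * (lucasU P Q m.+1 * (g * Q ^+ k)).
    by rewrite lucas_fact_recr !exprD exprS /A; ring.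
  by rewrite -xy; ring.
by apply: rpredD; apply: dvdz_mulr; [rewrite prod_recr | rewrite prod_recl]; apply: dvdz_mul.
Qed.

Lemma dvdz_prodR_lcm_fact k m : (0 < k)%N -> gcdz P Q = 1 -> gcdz (R 1%N) Q = 1 ->
  (\prod_(k <= i < k + m.+1) R i %| lcm_range R k (k + m) * (lucas_fact P Q m * g ^+ m))%Z.
Proof.
move=> k_gt0 PQ_coprime R1Q_coprime.
have [e dvd_e] := dvdz_prodR_mul_fact m k.
have prod_coprime : coprimez (\prod_(k <= i < k + m.+1) R i) Q.
  rewrite big_seq; apply: (big_ind (coprimez^~ Q)).
  - by rewrite /coprimez gcdzC gcdz1.
  - by move=> a b a_coprime b_coprime; rewrite coprimezMl a_coprime b_coprime.
  case=> [|i]; rewrite mem_index_iota => /andP[k_le_i _].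
    by have := leq_trans k_gt0 k_le_i.
  exact: coprimez_R_Q.
rewrite -(@Gauss_dvdzl _ _ (Q ^+ e)) ?coprimezXr // -mulrA.
apply: dvd_e => i i_range; apply: dvdz_biglcmz.
by rewrite mem_index_iota ltnS.
Qed.

End RecurrenceSequence.

Theorem theorem1 (P Q : int) (R : nat -> int)
  (hPQ : P * Q != 0)
  (hDelta : P ^+ 2 - 4 * Q != 0)
  (hR01 : 0 < `|R 0%N| + `|R 1%N|)
  (hgPQ : gcdz P Q = 1)
  (hgR1Q : gcdz (R 1%N) Q = 1)
  (hrec : forall m : nat, R m.+2 = P * R m.+1 - Q * R m)
  (hnotroot : forall alpha beta : algC,
      alpha ^+ 2 - P%:~R * alpha + Q%:~R = 0 ->
      beta ^+ 2 - P%:~R * beta + Q%:~R = 0 ->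
      alpha != beta ->
      forall m : nat, (0 < m)%N -> (alpha / beta) ^+ m != 1)
  (n k : nat) (hk : (0 < k)%N) (hkn : (k <= n)%N) :
  exists z : int,
    ((lcm_range R k n)%:~R : rat) =
      z%:~R * (((\prod_(k <= i < n.+1) R i)%:~R : rat)
               / ((lucas_fact P Q (n - k))%:~R * ((gcdz (R 0%N) (R 1%N))%:~R) ^+ (n - k))).
Proof.
have [m ->] : exists m, n = (k + m)%N by exists (n - k)%N; rewrite subnKC.
rewrite addKn -addnS.
have Q_neq0 : Q != 0 by move: hPQ; rewrite mulf_eq0 negb_or => /andP[].
have g_neq0 : gcdz (R 0%N) (R 1%N) != 0.
  rewrite gcdz_eq0 negb_and; move: hR01.
  by case: (R 0%N =P 0) => [-> | //]; rewrite normr0 add0r normr_gt0.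
have D_neq0 : lucas_fact P Q m * gcdz (R 0%N) (R 1%N) ^+ m != 0.
  by rewrite mulf_neq0 ?expf_neq0 ?(lucas_fact_neq0 Q_neq0 hDelta hnotroot).
rewrite -rmorphXn -rmorphM /=.
exact: (dvdz_mul_ratE rat D_neq0 (dvdz_prodR_lcm_fact hrec m hk hgPQ hgR1Q)).
Qed.
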